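(* In the multi-hop VAoI network described in the context, for each $i\in\{1,\dots,N\}$ the VAoI at node $i+1$ satisfies \[ \Delta_{i+1}(t)=\Delta_i(t-m_i)+\eta_{m_i}, \] where $m_i$ (the number of slots back to the last successful delivery on link $i$, so that $V_{i+1}(t)=V_i(t-m_i)$) is a geometric random variable with parameter $\rho_i$, $\mathbb{P}(m_i=\ell)=(1-\rho_i)^{\ell-1}\rho_i$ for $\ell=1,2,\dots$, and $\eta_k=V_S(t)-V_S(t-k)$ (the number of source versions generated in the last $k$ slots) is, for given $k$, a binomial random variable with parameters $k$ and $p_g$: $\mathbb{P}(\eta_k=r\mid k)=\binom{k}{r}p_g^r(1-p_g)^{k-r}$, $r=0,\dots,k$.
   Context: Time is slotted. A source generates a new version in each slot independently with probability $p_g$, and its version index $V_S(t)$ increases by one at the start of the slot following each generation. Nodes $0,1,\dots,N+1$ form a line; node $0$ always holds the current source version ($V_0(t)=V_S(t)$), node $N+1$ is the destination, and nodes $1,\dots,N$ are relays. Each node stores only the latest version it has received. Link $i$ (from node $i$ to node $i+1$) delivers a transmission successfully with probability $\rho_i$, independently across slots and links ($\rho_0=p_s$). Node $0$ transmits according to an update policy; each relay node $i\ge1$ transmits its stored version in every slot, so that $V_{i+1}(t+1)=V_i(t)$ if the transmission on link $i$ at slot $t$ succeeds and $V_{i+1}(t+1)=V_{i+1}(t)$ otherwise. The VAoI at node $j$ is $\Delta_j(t)=V_S(t)-V_j(t)$. *)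

From HB Require Import structures.
From mathcomp Require Import all_boot all_order all_algebra.
From mathcomp Require Import all_classical all_reals all_analysis.
Set Implicit Arguments. Unset Strict Implicit. Unset Printing Implicit Defensive.
Import Order.TTheory GRing.Theory Num.Theory.
Local Open Scope classical_set_scope.
Local Open Scope ring_scope.

Definition mutually_independent (d : measure_display) (T : measurableType d)
  (R : realType) (P : probability T R) (I : eqType) (E : I -> set T) : Prop :=
  forall s : seq I, uniq s ->
    P (\big[setI/setT]_(j <- s) E j) = (\prod_(j <- s) P (E j))%E.

(* Index of the elementary random events of the model:
   inl s        = "the source generates a new version in slot s",
   inr (i, s)   = "the transmission on link i at slot s succeeds". *)
Definition ev_index := (int + (nat * int))%type.

Definition model_events (T : Type) (gen : int -> set T)
  (succ : nat -> int -> set T) : ev_index -> set T :=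
  fun e => match e with inl s => gen s | inr p => succ p.1 p.2 end.

(* m i t w : number of slots back to the last successful delivery on link i
   strictly before slot t, i.e. the least l >= 1 such that the transmission on
   link i at slot t - l succeeded (0 if there is no such slot). *)
Definition last_succ (T : Type) (succ : nat -> int -> set T) (i : nat) (t : int)
  (w : T) : nat :=
  let p := fun l : nat => `[< (0 < l)%N /\ succ i (t - l%:Z) w >] in
  match pselect (exists l, p l) with
  | left h => ex_minn h
  | right _ => 0%N
  end.

Definition vaoi (T : Type) (VS : int -> T -> int) (V : nat -> int -> T -> int)
  (j : nat) (t : int) (w : T) : int := VS t w - V j t w.

Definition new_versions (T : Type) (VS : int -> T -> int) (k : nat) (t : int) (w : T) : int :=
  VS t w - VS (t - k%:Z) w.

From HB Require Import structures.
From mathcomp Require Import all_boot all_order all_algebra.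
From mathcomp Require Import all_classical all_reals all_analysis.
From mathcomp Require Import ring lra zify.
Import Order.TTheory GRing.Theory Num.Theory.
Local Open Scope classical_set_scope.
Local Open Scope ring_scope.

(* Between its last successful reception at slot t - m_i and slot t, relay
   i + 1 only sees failures, so V_{i+1}(t) = V_i(t - m_i); the VAoI identity
   is then the telescoping V_S(t) - V_i(t - m_i) = Delta_i(t - m_i) + eta_{m_i}.
   The event {m_i = l} prescribes a success at slot t - l and failures at
   slots t - l + 1, ..., t - 1 of link i; by independence, which extends to
   complements, its probability is (1 - rho_i)^(l-1) rho_i, and {m_i = 0} is
   contained in every run of n failures, hence null. The count eta_k of
   generations in the k slots before t is a sum of k independent
   Bernoulli(p_g) indicators, hence binomial, and these generation events are
   disjoint from the link events describing {m_i = k}, which gives the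
   product formula for the joint law. *)

Set Implicit Arguments.
Unset Strict Implicit.
Unset Printing Implicit Defensive.

Lemma binomial_pmfE (R : realType) n (p : R) k :
  binomial_pmf n p k = 'C(n, k)%:R * p ^+ k * (1 - p) ^+ (n - k).
Proof. by rewrite /binomial_pmf -mulr_natl mulrA. Qed.

Lemma binomial_pmf0n (R : realType) (p : R) k : binomial_pmf 0 p k = (k == 0)%:R.
Proof.
by rewrite binomial_pmfE bin0n sub0n expr0 mulr1; case: k => [|k]; rewrite ?mul0r ?mul1r.
Qed.

Lemma binomial_pmfS0 (R : realType) n (p : R) :
  binomial_pmf n.+1 p 0 = (1 - p) * binomial_pmf n p 0.
Proof. by rewrite !binomial_pmfE !bin0 !subn0 exprS; ring. Qed.

Lemma binomial_pmfSS (R : realType) n (p : R) k :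
  binomial_pmf n.+1 p k.+1 = p * binomial_pmf n p k + (1 - p) * binomial_pmf n p k.+1.
Proof.
rewrite !binomial_pmfE binS natrD subSS.
have [ltkn|lenk] := ltnP k n; last by rewrite bin_small ?ltnS // exprS; ring.
by rewrite -(subnSK ltkn) !exprS; ring.
Qed.

Section independent_events.
Context d (T : measurableType d) (R : realType) (P : probability T R).
Variables (I : eqType) (E : I -> set T) (q : I -> R).
Hypotheses (mE : forall j, measurable (E j)) (PE : forall j, P (E j) = (q j)%:E).
Hypothesis indepE : mutually_independent P E.

Definition literal (x : I * bool) : set T := if x.2 then E x.1 else ~` E x.1.

Definition pattern (u : seq (I * bool)) : set T := \big[setI/setT]_(x <- u) literal x.

Definition pattern_prob (u : seq (I * bool)) : R :=
  \prod_(x <- u) (if x.2 then q x.1 else 1 - q x.1).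

Lemma pattern_cons x u : pattern (x :: u) = literal x `&` pattern u.
Proof. by rewrite /pattern big_cons. Qed.

Lemma pattern_probE x u :
  pattern_prob (x :: u) = (if x.2 then q x.1 else 1 - q x.1) * pattern_prob u.
Proof. by rewrite /pattern_prob big_cons. Qed.

Lemma patternP u w : pattern u w <-> forall x, x \in u -> literal x w.
Proof.
elim: u => [|x u IH]; first by rewrite /pattern big_nil.
rewrite pattern_cons; split=> [[xw /IH uw] y|uw].
  by rewrite inE => /predU1P[->|/uw].
by split; [apply: uw; rewrite mem_head | apply/IH => y yu; apply: uw; rewrite inE yu orbT].
Qed.

Lemma measurable_pattern u : measurable (pattern u).
Proof.
by apply: bigsetI_measurable => -[j []] _; rewrite /literal /=; [|apply: measurableC].
Qed.

(* Independence of the [E j] for [j] in [v] and [map fst u] is inherited by the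
   complements, one literal at a time, via [P (A `\` E j) = P A - P (A `&` E j)]. *)
Lemma prob_bigsetI_pattern v u : uniq (v ++ map fst u) ->
  P (\big[setI/setT]_(j <- v) E j `&` pattern u)
  = ((\prod_(j <- v) q j) * pattern_prob u)%:E.
Proof.
elim: u v => [|[j b] u IH] v.
  rewrite cats0 /pattern /pattern_prob !big_nil setIT mulr1 => /indepE ->.
  by rewrite -prodEFin; apply: eq_bigr => k _; rewrite PE.
move=> uniq_vju.
have {uniq_vju} uniq_jvu : uniq ((j :: v) ++ map fst u).
  by rewrite -[j :: v]cat1s -catA uniq_catCA.
have uniq_vu : uniq (v ++ map fst u).
  by apply: subseq_uniq uniq_jvu; apply: subseq_cons.
have IHj := IH _ uniq_jvu; rewrite !big_cons in IHj.
rewrite pattern_cons pattern_probE /literal /=; case: b.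
  by rewrite setIA [_ `&` E j]setIC IHj; congr (_%:E); ring.
set A := \big[setI/setT]_(k <- v) E k `&` pattern u.
have mA : measurable A.
  by apply: measurableI; [apply: bigsetI_measurable | apply: measurable_pattern].
have -> : \big[setI/setT]_(k <- v) E k `&` (~` E j `&` pattern u) = A `\` E j.
  by rewrite setDE setIAC -setIA.
have -> : P (A `\` E j) = (P A - P (A `&` E j))%E.
  by apply: measureD => //; exact: le_lt_trans (probability_le1 P mA) (ltry 1).
rewrite /A IH // setIAC [_ `&` E j]setIC IHj -EFinB.
by congr (_%:E); ring.
Qed.

Lemma prob_pattern u : uniq (map fst u) -> P (pattern u) = (pattern_prob u)%:E.
Proof. by move=> /(@prob_bigsetI_pattern [::]); rewrite !big_nil setTI mul1r. Qed.

Definition count_events (s : seq I) (w : T) : nat := count (fun j => `[< E j w >]) s.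

Lemma count_events_nil r :
  [set w | count_events [::] w = r] = if r is 0 then setT else set0.
Proof. by case: r => [|r]; apply/seteqP; split. Qed.

Lemma count_events_succ s r : [set w | (count_events s w).+1 = r] =
  if r is r'.+1 then [set w | count_events s w = r'] else set0.
Proof. by case: r => [|r]; apply/seteqP; split => w //= => [[]|->]. Qed.

Lemma count_events_cons j s r : [set w | count_events (j :: s) w = r] =
  (E j `&` [set w | (count_events s w).+1 = r])
  `|` (~` E j `&` [set w | count_events s w = r]).
Proof.
apply/seteqP; split=> w; rewrite /count_events /=.
  by case: (asboolP (E j w)) => Ejw <-; [left | right]; split.
by case=> -[Ejw <-]; [rewrite (asboolT Ejw) | rewrite (asboolF Ejw)].
Qed.

Lemma measurable_count_events s r : measurable [set w | count_events s w = r].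
Proof.
elim: s r => [|j s IH] r; first by rewrite count_events_nil; case: r.
rewrite count_events_cons count_events_succ.
apply: measurableU; apply: measurableI => //; last exact: measurableC.
by case: r.
Qed.

Lemma prob_pattern_count_events (p : R) u s r :
  uniq (map fst u ++ s) -> {in s, forall j, q j = p} ->
  P (pattern u `&` [set w | count_events s w = r])
  = (pattern_prob u * binomial_pmf (size s) p r)%:E.
Proof.
elim: s u r => [|j s IH] u r uniq_us qs.
  rewrite count_events_nil binomial_pmf0n; case: r => [|r].
    by rewrite setIT prob_pattern ?mulr1 // -(cats0 (map fst u)).
  by rewrite setI0 measure0 mulr0.
have uniq_jus b : uniq (map fst ((j, b) :: u) ++ s).
  by change (uniq ([:: j] ++ map fst u ++ s)); rewrite uniq_catCA.
have qs' : {in s, forall k, q k = p} by move=> k ks; apply: qs; rewrite inE ks orbT.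
have qj : q j = p by apply: qs; rewrite mem_head.
have pattern_true : E j `&` pattern u = pattern ((j, true) :: u).
  by rewrite pattern_cons.
have pattern_false : ~` E j `&` pattern u = pattern ((j, false) :: u).
  by rewrite pattern_cons.
rewrite count_events_cons setIUr !setIA ![pattern u `&` _]setIC.
rewrite pattern_true pattern_false count_events_succ; case: r => [|r].
  by rewrite setI0 set0U IH // pattern_probE binomial_pmfS0 /= qj; congr (_%:E); ring.
set A := pattern ((j, true) :: u) `&` _; set B := pattern ((j, false) :: u) `&` _.
have -> : P (A `|` B) = (P A + P B)%E.
  apply: measureU;
    try exact: measurableI (measurable_pattern _) (measurable_count_events _ _).
  rewrite /A /B !pattern_cons; apply/seteqP; split=> // w [[[Ejw _] _] [[nEjw _] _]].
  exact: nEjw Ejw.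
rewrite !IH // -EFinD !pattern_probE binomial_pmfSS /= qj.
by congr (_%:E); ring.
Qed.

Lemma prob_count_events (p : R) s r : uniq s -> {in s, forall j, q j = p} ->
  P [set w | count_events s w = r] = (binomial_pmf (size s) p r)%:E.
Proof.
move=> uniq_s qs; rewrite -[X in P X]setTI.
have := @prob_pattern_count_events p [::] s r uniq_s qs.
by rewrite /pattern /pattern_prob !big_nil mul1r.
Qed.

End independent_events.

Section last_success.
Variables (T : Type) (succ : nat -> int -> set T) (i : nat) (t : int) (w : T).

Lemma last_succP l : (0 < l)%N ->
  last_succ succ i t w = l <->
  succ i (t - l%:Z) w /\ forall j, (0 < j < l)%N -> ~ succ i (t - j%:Z) w.
Proof.
move=> l_gt0; rewrite /last_succ; case: pselect => [ex|noex]; last first.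
  split=> [l0|[sl _]]; first by rewrite -l0 in l_gt0.
  by exfalso; apply: noex; exists l; apply/asboolP.
case: ex_minnP => m /asboolP[m_gt0 sm] min_m; split=> [<-|[sl no_before]].
  split=> // j /andP[j_gt0 ltjm] sj.
  by have := min_m j (asboolT (conj j_gt0 sj)); rewrite leqNgt ltjm.
apply/eqP; rewrite eqn_leq min_m ?andbT; last exact/asboolP.
by rewrite leqNgt; apply/negP => ltml; apply: (no_before m) => //; rewrite m_gt0.
Qed.

Lemma last_succ_eq0 :
  last_succ succ i t w = 0%N <-> forall l, (0 < l)%N -> ~ succ i (t - l%:Z) w.
Proof.
rewrite /last_succ; case: pselect => [ex|noex].
  case: ex_minnP => m /asboolP[m_gt0 sm] _; split=> [m0|no_succ].
    by rewrite m0 in m_gt0.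
  by exfalso; apply: no_succ sm.
by split=> // _ l l_gt0 sl; apply: noex; exists l; apply/asboolP.
Qed.

End last_success.

Section relay.
Variables (T : Type) (succ : nat -> int -> set T) (V : nat -> int -> T -> int) (i : nat).
Hypothesis relay : forall t w,
  V i.+1 (t + 1) w = if `[< succ i t w >] then V i t w else V i.+1 t w.

Lemma relay_idle t w n : (forall j, (0 < j <= n)%N -> ~ succ i (t - j%:Z) w) ->
  V i.+1 t w = V i.+1 (t - n%:Z) w.
Proof.
elim: n => [|n IH] idle; first by rewrite subr0.
rewrite IH => [|j /andP[j_gt0 lejn]]; last by apply: idle; rewrite j_gt0 ltnW.
have -> : t - n%:Z = t - n.+1%:Z + 1 by lia.
by rewrite relay asboolF //; apply: idle n.+1 (leqnn _).
Qed.

Lemma relay_last_succ t w : (0 < last_succ succ i t w)%N ->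
  V i.+1 t w = V i (t - (last_succ succ i t w)%:Z) w.
Proof.
move=> m_gt0; have [sm idle] := (last_succP succ i t w m_gt0).1 erefl.
move: (last_succ succ i t w) m_gt0 sm idle => [|m] // _ sm idle.
rewrite (@relay_idle _ _ m) => [|j /andP[j_gt0 lejm]]; last by apply: idle; rewrite j_gt0.
have -> : t - m%:Z = t - m.+1%:Z + 1 by lia.
by rewrite relay asboolT.
Qed.

End relay.

Lemma vaoi_relay (T : Type) (VS : int -> T -> int) (V : nat -> int -> T -> int) j t w l :
  V j.+1 t w = V j (t - l%:Z) w ->
  vaoi VS V j.+1 t w = vaoi VS V j (t - l%:Z) w + new_versions VS l t w.
Proof. by rewrite /vaoi /new_versions => ->; ring. Qed.

Lemma new_versions_count (T : Type) (gen : int -> set T) (VS : int -> T -> int) :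
  (forall s w, VS (s + 1) w = VS s w + (`[< gen s w >] : nat)%:Z) ->
  forall k t w,
  new_versions VS k t w = (count (fun j => `[< gen (t - j.+1%:Z) w >]) (iota 0 k))%:Z.
Proof.
move=> VS_step; elim=> [|k IH] t w; first by rewrite /new_versions subr0 subrr.
have := VS_step (t - k.+1%:Z) w; rewrite (_ : t - k.+1%:Z + 1 = t - k%:Z); last by lia.
move=> step; rewrite -addn1 iotaD count_cat /= add0n addn0 addn1 PoszD -IH.
by rewrite /new_versions step; ring.
Qed.

Lemma ge0_le_expr_eq0 (R : archiRealFieldType) (x c : R) :
  0 <= x -> 0 <= c < 1 -> (forall n, x <= c ^+ n) -> x = 0.
Proof.
move=> x_ge0 /andP[c_ge0 c_lt1] le_x; apply/le_anti; rewrite x_ge0 andbT.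
by apply: (cvgr_to_ge (cvg_expr _)); [rewrite ger0_norm | exact: nearW].
Qed.

Section relay_link.
Context d (T : measurableType d) (R : realType) (P : probability T R).
Variables (pg : R) (rho : nat -> R) (gen : int -> set T) (succ : nat -> int -> set T).
Hypothesis mgen : forall s, measurable (gen s).
Hypothesis msucc : forall i s, measurable (succ i s).
Hypothesis Pgen : forall s, P (gen s) = pg%:E.
Hypothesis Psucc : forall i s, P (succ i s) = (rho i)%:E.
Hypothesis indep : mutually_independent P (model_events gen succ).
Variables (i : nat) (t : int).

Let E := model_events gen succ.
Let q (e : ev_index) : R := if e is inr x then rho x.1 else pg.
Let mE e : measurable (E e).
Proof. by case: e => [s|[j s]]; [exact: mgen | exact: msucc]. Qed.
Let PE e : P (E e) = (q e)%:E.
Proof. by case: e => [s|[j s]]; [exact: Pgen | exact: Psucc]. Qed.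

Definition link_failures n : seq (ev_index * bool) :=
  [seq (inr (i, t - j.+1%:Z), false) | j <- iota 0 n].

Definition source_slots k : seq ev_index := [seq inl (t - j.+1%:Z) | j <- iota 0 k].

Lemma link_failuresP n w : pattern E (link_failures n) w <->
  forall j, (0 < j <= n)%N -> ~ succ i (t - j%:Z) w.
Proof.
rewrite patternP; split=> [fail j /andP[j_gt0 lejn]|idle x /mapP[j]].
  apply: (fail (inr (i, t - j%:Z), false)); apply/mapP; exists j.-1.
    by rewrite mem_iota; lia.
  by rewrite prednK.
by rewrite mem_iota => /andP[_ ltjn] ->; apply: idle; lia.
Qed.

Lemma uniq_link_failures n : uniq (map fst (link_failures n)).
Proof. by rewrite -map_comp map_inj_uniq ?iota_uniq // => a b [] ?; lia. Qed.

Lemma pattern_prob_link_failures n : pattern_prob q (link_failures n) = (1 - rho i) ^+ n.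
Proof.
by rewrite /pattern_prob big_map /= big_const_seq count_predT size_iota iter_mulr mulr1.
Qed.

Definition last_succ_literals l := (inr (i, t - l%:Z), true) :: link_failures l.-1.

Lemma uniq_last_succ_literals l : uniq (map fst (last_succ_literals l)).
Proof.
rewrite /= uniq_link_failures andbT -map_comp; apply/mapP => -[j].
by rewrite mem_iota => ? [] ?; lia.
Qed.

Lemma last_succ_pattern l : (0 < l)%N ->
  [set w | last_succ succ i t w = l] = pattern E (last_succ_literals l).
Proof.
move=> l_gt0; apply/seteqP; split=> w; rewrite /= pattern_cons last_succP //.
  by case=> sl idle; split=> //; apply/link_failuresP => j lejl; apply: idle; lia.
by case=> sl /link_failuresP idle; split=> // j ltjl; apply: idle; lia.
Qed.

Lemma prob_last_succ l : (0 < l)%N ->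
  P [set w | last_succ succ i t w = l] = ((1 - rho i) ^+ l.-1 * rho i)%:E.
Proof.
move=> l_gt0; rewrite last_succ_pattern // (prob_pattern mE PE indep).
  by rewrite pattern_probE pattern_prob_link_failures mulrC.
exact: uniq_last_succ_literals.
Qed.

Lemma last_succ_eq0_bigcap : [set w | last_succ succ i t w = 0%N] =
  \bigcap_n ~` succ i (t - n.+1%:Z).
Proof.
apply/seteqP; split=> w /= => [/last_succ_eq0 no_succ n _|no_succ]; first exact: no_succ.
by apply/last_succ_eq0 => l l_gt0; have := no_succ l.-1 I; rewrite prednK.
Qed.

Lemma measurable_last_succ_eq0 : measurable [set w | last_succ succ i t w = 0%N].
Proof.
by rewrite last_succ_eq0_bigcap; apply: bigcapT_measurable => n; apply: measurableC.
Qed.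

(* [m = 0] lies in every run of n failures, of probability (1 - rho i)^n. *)
Lemma prob_last_succ_eq0 : 0 < rho i -> P [set w | last_succ succ i t w = 0%N] = 0%E.
Proof.
move=> rho_gt0; set A := [set w | _].
have rho_le1 : rho i <= 1 by rewrite -lee_fin -(Psucc i t) probability_le1.
have mA : measurable A by exact: measurable_last_succ_eq0.
have PA_le n : (P A <= ((1 - rho i) ^+ n)%:E)%E.
  rewrite -pattern_prob_link_failures -(prob_pattern mE PE indep) ?uniq_link_failures //.
  apply: le_measure; rewrite ?inE //; first exact: measurable_pattern.
  move=> w /last_succ_eq0 no_succ; apply/link_failuresP => j /andP[j_gt0 _].
  exact: no_succ.
rewrite -[P A]fineK ?(fin_num_measure P) //; congr (_%:E).
apply: (@ge0_le_expr_eq0 _ _ (1 - rho i)); first exact/fine_ge0/measure_ge0.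
  by apply/andP; split; lra.
by move=> n; rewrite -lee_fin fineK ?(fin_num_measure P).
Qed.

Lemma last_succ_gt0_ae : 0 < rho i -> \forall w \ae P, (0 < last_succ succ i t w)%N.
Proof.
move=> rho_gt0; exists [set w | last_succ succ i t w = 0%N]; split.
- exact: measurable_last_succ_eq0.
- exact: prob_last_succ_eq0.
- by move=> w /=; rewrite lt0n => /negP/negbNE/eqP.
Qed.

Variable VS : int -> T -> int.
Hypothesis VS_step : forall s w, VS (s + 1) w = VS s w + (`[< gen s w >] : nat)%:Z.

Lemma new_versions_count_events k w :
  new_versions VS k t w = (count_events E (source_slots k) w)%:Z.
Proof. by rewrite (new_versions_count VS_step) /count_events count_map. Qed.

Lemma new_versions_set k r : [set w | new_versions VS k t w = r%:Z] =
  [set w | count_events E (source_slots k) w = r].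
Proof.
by apply/seteqP; split=> w /=; rewrite new_versions_count_events; [case | move->].
Qed.

Lemma uniq_source_slots k : uniq (source_slots k).
Proof. by rewrite map_inj_uniq ?iota_uniq // => a b [] ?; lia. Qed.

Lemma prob_new_versions k r :
  P [set w | new_versions VS k t w = r%:Z] = (binomial_pmf k pg r)%:E.
Proof.
rewrite new_versions_set (prob_count_events mE PE indep (p := pg)) ?uniq_source_slots //.
  by rewrite size_map size_iota.
by move=> _ /mapP[j _ ->].
Qed.

Lemma prob_last_succ_new_versions k r : (0 < k)%N ->
  P [set w | last_succ succ i t w = k /\ new_versions VS k t w = r%:Z]
  = (P [set w | last_succ succ i t w = k] * (binomial_pmf k pg r)%:E)%E.
Proof.
move=> k_gt0; rewrite -[[set w | _ /\ _]]/([set w | _] `&` [set w | _]).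
rewrite new_versions_set last_succ_pattern //.
rewrite (prob_pattern_count_events mE PE indep (p := pg)); last 2 first.
- rewrite cat_uniq uniq_last_succ_literals uniq_source_slots andbT /=.
  apply/hasPn => _ /mapP[j _ ->]; rewrite inE /= -map_comp.
  by apply/mapP => -[].
- by move=> _ /mapP[j _ ->].
by rewrite (prob_pattern mE PE indep) ?uniq_last_succ_literals // size_map size_iota.
Qed.

End relay_link.

Unset Implicit Arguments.

Theorem proposition4 (R : realType) (d : measure_display) (T : measurableType d)
  (P : probability T R) (N : nat) (pg : R) (rho : nat -> R)
  (gen : int -> set T) (succ : nat -> int -> set T)
  (VS : int -> T -> int) (V : nat -> int -> T -> int) :
  (forall s, measurable (gen s)) ->
  (forall i s, measurable (succ i s)) ->
  (forall s, P (gen s) = pg%:E) ->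
  (forall i s, P (succ i s) = (rho i)%:E) ->
  mutually_independent P (model_events gen succ) ->
  (forall i, (1 <= i <= N)%N -> 0 < rho i) ->
  (* source version counter: increases by one after each generation *)
  (forall s w, VS (s + 1) w = VS s w + (`[< gen s w >] : nat)%:Z) ->
  (* node 0 always holds the current source version *)
  (forall t w, V 0%N t w = VS t w) ->
  (* relays transmit their stored version in every slot *)
  (forall i t w, (1 <= i <= N)%N ->
     V i.+1 (t + 1) w = if `[< succ i t w >] then V i t w else V i.+1 t w) ->
  forall i : nat, (1 <= i <= N)%N -> forall t : int,
    let m := fun w => last_succ succ i t w in
    (almost_everywhere P [set w | V i.+1 t w = V i (t - (m w)%:Z) w]
    /\ almost_everywhere P [set w |
          vaoi VS V i.+1 t w = vaoi VS V i (t - (m w)%:Z) w + new_versions VS (m w) t w])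
    /\ (forall l : nat, (1 <= l)%N ->
          P [set w | m w = l] = ((1 - rho i) ^+ l.-1 * rho i)%:E)
    /\ (forall k r : nat, (r <= k)%N ->
          P [set w | new_versions VS k t w = r%:Z]
            = ('C(k, r)%:R * pg ^+ r * (1 - pg) ^+ (k - r))%:E)
    /\ (forall k r : nat, (1 <= k)%N -> (r <= k)%N ->
          P [set w | m w = k /\ new_versions VS k t w = r%:Z]
            = (P [set w | m w = k]
               * ('C(k, r)%:R * pg ^+ r * (1 - pg) ^+ (k - r))%:E)%E).
Proof.
move=> mgen msucc Pgen Psucc indep rho_gt0 VS_step _ relay i Hi t m.
have ae_relay : \forall w \ae P, V i.+1 t w = V i (t - (m w)%:Z) w.
  apply: filterS (last_succ_gt0_ae mgen msucc Pgen Psucc indep t (rho_gt0 i Hi)).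
  by move=> w; apply: relay_last_succ => t' w'; apply: relay.
split; first split=> //.
  by apply: filterS ae_relay => w; apply: vaoi_relay.
split; first exact: prob_last_succ.
split=> [k r _ | k r k_gt0 _]; rewrite -binomial_pmfE.
  exact: prob_new_versions.
exact: prob_last_succ_new_versions.
Qed.
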